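(* Let $\Bbbk$ be a unital ring and $n,r$ positive integers. Let $\Lambda$ be a set-partition of $\{1,\dots,r\}$ and $\Lambda'$ a set-partition of $\{1,\dots,r+1\}$, each with at most $n$ parts. Then (a) $\mathbf V(\Lambda)\cong H_n(\ell(\Lambda))$ as left $\Bbbk W_n$-modules; (b) $\mathbf V'(\Lambda')\cong H_{n-1}(\ell(\Lambda')-1)$ as left $\Bbbk W_{n-1}$-modules.
   Context: $\mathbf V$ is a free $\Bbbk$-module with basis $\mathbf v_1,\dots,\mathbf v_n$; $W_n$ (symmetric group on $\{1,\dots,n\}$) acts on tensor powers by $w(\mathbf v_{j_1}\otimes\cdots\otimes\mathbf v_{j_m})=\mathbf v_{w(j_1)}\otimes\cdots\otimes\mathbf v_{w(j_m)}$, and $W_{n-1}=\{w:w(n)=n\}$ is identified with the symmetric group on $\{1,\dots,n-1\}$. The value-type of $(i_1,\dots,i_m)$ is the set-partition of $\{1,\dots,m\}$ with parts the nonempty sets $\{\alpha:i_\alpha=j\}$; $\ell$ denotes number of parts. $\mathbf V(\Lambda)\subseteq\mathbf V^{\otimes r}$ is spanned by simple tensors $\mathbf v_{i_1}\otimes\cdots\otimes\mathbf v_{i_r}$ of value-type $\Lambda$; $\mathbf V'(\Lambda')$ is spanned by $\mathbf v_{i_1}\otimes\cdots\otimes\mathbf v_{i_r}\otimes\mathbf v_n$ with $(i_1,\dots,i_r,n)$ of value-type $\Lambda'$. For $1\le l\le m$, $H_m(l)$ is the $\Bbbk W_m$-submodule of $\mathbf V_m^{\otimes l}$ (where $\mathbf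 V_m$ is free with basis $\mathbf v_1,\dots,\mathbf v_m$) generated by $\mathbf v_{m-l+1}\otimes\cdots\otimes\mathbf v_m$; $H_m(0)=\mathbf V_m^{\otimes 0}=\Bbbk$ with trivial action. *)

From HB Require Import structures.
From mathcomp Require Import all_boot all_order all_fingroup all_algebra.
Set Implicit Arguments. Unset Strict Implicit. Unset Printing Implicit Defensive.
Import GRing.Theory.
Local Open Scope ring_scope.

(* Conventions: indices are 0-based, {1..n} is 'I_n, v_j is index j-1.
   The tensor power V_n^{(x)m} (free k-module on basis v_{j_1}(x)...(x)v_{j_m})
   is modelled as the coefficient functions {ffun {ffun 'I_m -> 'I_n} -> k};
   the basis tensor indexed by t : {ffun 'I_m -> 'I_n} is [basis t]. *)
Definition tens (k : pzRingType) (m n : nat) := {ffun {ffun 'I_m -> 'I_n} -> k}.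

Definition basisv (k : pzRingType) (m n : nat) (t : {ffun 'I_m -> 'I_n}) : tens k m n :=
  [ffun s => (s == t)%:R].

Definition tadd (k : pzRingType) m n (x y : tens k m n) : tens k m n :=
  [ffun s => x s + y s].
Definition tscale (k : pzRingType) m n (c : k) (x : tens k m n) : tens k m n :=
  [ffun s => c * x s].

Definition tsub (k : pzRingType) m n (f : 'I_n -> 'I_n) (x : tens k m n) : tens k m n :=
  [ffun t : {ffun 'I_m -> 'I_n} => x [ffun a => f (t a)]].

(* action of w in W_n: w (v_{j_1} (x) ... ) = v_{w j_1} (x) ...,
   i.e. (w . x)(t) = x (w^-1 o t) *)
Definition Wact (k : pzRingType) m n (w : {perm 'I_n}) (x : tens k m n) : tens k m n :=
  tsub (w^-1)%g x.

(* W_{n-1} (n = m.+1) = {w | w(n) = n} identified with the permutations of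
   {1..n-1}: sigma is sent to lift_perm ord_max ord_max sigma. *)
Definition Wact' (k : pzRingType) q m (s : {perm 'I_m}) (x : tens k q m.+1) : tens k q m.+1 :=
  Wact (lift_perm ord_max ord_max s) x.

Definition valtype m n (t : {ffun 'I_m -> 'I_n}) : {set {set 'I_m}} :=
  [set [set a | t a == j] | j : 'I_n] :\ set0.

(* V(Lambda): span of simple tensors of value-type Lambda *)
Definition Vmod (k : pzRingType) n r (L : {set {set 'I_r}}) (x : tens k r n) : Prop :=
  forall t, x t != 0 -> valtype t = L.

(* V'(Lambda'): span of v_{i_1} (x) ... (x) v_{i_r} (x) v_n with
   (i_1,...,i_r,n) of value-type Lambda'  (here n = m.+1, v_n = ord_max) *)
Definition Vmod' (k : pzRingType) m r (L : {set {set 'I_r.+1}}) (x : tens k r.+1 m.+1) : Prop :=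
  forall t, x t != 0 -> t ord_max = ord_max /\ valtype t = L.

(* the generator v_{m-l+1} (x) ... (x) v_m  (0-based: position i has index m-l+i) *)
Definition Hgen m l (g : {ffun 'I_l -> 'I_m}) : Prop :=
  forall i : 'I_l, val (g i) = (m - l + i)%N.

(* H_m(l): the kW_m-submodule of V_m^{(x)l} generated by the generator,
   i.e. the set of all (sum_w c_w w) . gen.  For l = 0, V_m^{(x)0} = k with
   trivial action and this is all of k. *)
Definition Hmod (k : pzRingType) m l (x : tens k l m) : Prop :=
  exists g, Hgen g /\
  exists c : {perm 'I_m} -> k,
    x = [ffun s => \sum_(w : {perm 'I_m}) c w * Wact w (basisv k g) s].

Definition kG_iso (k : pzRingType) (G : Type) m1 n1 m2 n2
  (a1 : G -> tens k m1 n1 -> tens k m1 n1) (a2 : G -> tens k m2 n2 -> tens k m2 n2)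
  (M1 : tens k m1 n1 -> Prop) (M2 : tens k m2 n2 -> Prop) : Prop :=
  exists phi : tens k m1 n1 -> tens k m2 n2,
  [/\ (forall x, M1 x -> M2 (phi x)),
      (forall x y, M1 x -> M1 y -> phi x = phi y -> x = y),
      (forall y, M2 y -> exists2 x, M1 x & phi x = y)
    & (forall x y, M1 x -> M1 y -> phi (tadd x y) = tadd (phi x) (phi y)) /\
      (forall c x, M1 x -> phi (tscale c x) = tscale c (phi x)) /\
      (forall g x, M1 x -> phi (a1 g x) = a2 g (phi x))].

(* Both sides are permutation modules on injective tuples.  A tuple has value-type [L] iff
   it factors as [h \o idx], where [idx] labels the blocks of [L] by [0..l-1] and
   [h : 'I_l -> 'I_n] is injective; [W_n] acts through [h].  Since [W_n] is transitive on
   injective [l]-tuples, [H_n(l)] is the span of all injective tuples.  Transporting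
   coefficients along [h |-> h \o idx] is then a [kW_n]-isomorphism.  For (b), label the
   block of [r+1] by [l] and extend [s : 'I_(l-1) -> 'I_(n-1)] by [l |-> n]; this
   intertwines [W_(n-1)] with its image in [W_n]. *)

From HB Require Import structures.
From mathcomp Require Import all_boot all_order all_fingroup all_algebra.
From mathcomp Require Import primitive_action alt zify.
Set Implicit Arguments. Unset Strict Implicit. Unset Printing Implicit Defensive.
Import GRing.Theory.
Local Open Scope ring_scope.

Definition supported (T : finType) (k : pzRingType) (A : T -> Prop) (x : {ffun T -> k})
    : Prop :=
  forall t, x t != 0 -> A t.

Lemma kG_iso_congr_r (k : pzRingType) (G : Type) m1 n1 m2 n2
    (a1 : G -> tens k m1 n1 -> tens k m1 n1) (a2 : G -> tens k m2 n2 -> tens k m2 n2)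
    (M1 : tens k m1 n1 -> Prop) (M2 M2' : tens k m2 n2 -> Prop) :
  (forall y, M2 y <-> M2' y) -> kG_iso a1 a2 M1 M2 -> kG_iso a1 a2 M1 M2'.
Proof.
move=> M2E [phi [phiM inj onto hom]]; exists phi; split=> //.
- by move=> x /phiM/M2E.
- by move=> y /M2E/onto.
Qed.

Lemma kG_iso_supported (k : pzRingType) (G : Type) m1 n1 m2 n2
    (a1 : G -> tens k m1 n1 -> tens k m1 n1) (a2 : G -> tens k m2 n2 -> tens k m2 n2)
    (u : G -> {ffun 'I_m1 -> 'I_n1} -> {ffun 'I_m1 -> 'I_n1})
    (v : G -> {ffun 'I_m2 -> 'I_n2} -> {ffun 'I_m2 -> 'I_n2})
    (A : {ffun 'I_m1 -> 'I_n1} -> Prop) (B : pred {ffun 'I_m2 -> 'I_n2})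
    (f : {ffun 'I_m2 -> 'I_n2} -> {ffun 'I_m1 -> 'I_n1}) :
    (forall g x t, a1 g x t = x (u g t)) ->
    (forall g y s, a2 g y s = y (v g s)) ->
    {in B, forall s, A (f s)} -> {in B &, injective f} ->
    (forall t, A t -> exists2 s, B s & f s = t) ->
    (forall g s, B (v g s) = B s) ->
    (forall g, {in B, forall s, f (v g s) = u g (f s)}) ->
  kG_iso a1 a2 (supported A) (supported B).
Proof.
move=> a1E a2E fA f_inj f_onto vB fv.
pose phi (x : tens k m1 n1) : tens k m2 n2 := [ffun s => if B s then x (f s) else 0].
have phiE x s : phi x s = if B s then x (f s) else 0 by rewrite ffunE.
exists phi; split.
- by move=> x _ s; rewrite phiE; case: (B s); rewrite ?eqxx.
- move=> x y Ax Ay /ffunP phi_xy; apply/ffunP => t.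
  have eq_on_A : A t -> x t = y t.
    by case/f_onto=> s Bs <-; have := phi_xy s; rewrite !phiE Bs.
  have [x0 | /Ax/eq_on_A //] := eqVneq (x t) 0.
  by have [y0 | /Ay/eq_on_A //] := eqVneq (y t) 0; rewrite x0 y0.
- move=> y By.
  pose x : tens k m1 n1 :=
    [ffun t => if [pick s | B s && (f s == t)] is Some s then y s else 0].
  exists x => [t|].
    rewrite ffunE; case: pickP => [s /andP [Bs /eqP <-] _ | _]; first exact: fA.
    by rewrite eqxx.
  apply/ffunP => s; rewrite phiE ffunE; case Bs: (B s).
    case: pickP => [s' /andP [Bs' /eqP /f_inj -> //] | /(_ s)].
    by rewrite Bs eqxx.
  by apply/esym/eqP; apply: contraFT Bs => /By.
- split; [|split].
  + move=> x y _ _; apply/ffunP => s.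
    by rewrite !(ffunE, phiE); case: (B s); rewrite ?addr0.
  + move=> c x _; apply/ffunP => s.
    by rewrite !(ffunE, phiE); case: (B s); rewrite ?mulr0.
  + move=> g x _; apply/ffunP => s.
    by rewrite a2E !phiE a1E vB; case Bs: (B s); rewrite ?fv.
Qed.

Lemma perm_of_injections l m (g s : 'I_l -> 'I_m) : injective g -> injective s ->
  exists w : {perm 'I_m}, forall a, w (g a) = s a.
Proof.
move=> g_inj s_inj.
have l_le_m : (l <= #|'I_m|)%N by rewrite -(card_ord l) -(card_codom g_inj) max_card.
have dtuple_inj (h : 'I_l -> 'I_m) : injective h -> [tuple h i | i < l] \in l.-dtuple(setT).
  by move=> h_inj; apply/dtuple_onP; split=> [i j|i]; rewrite ?inE // !tnth_mktuple => /h_inj.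
have [w _ wgs] :=
  atransP2 (ntransitive_weak l_le_m (Sym_trans 'I_m)) (dtuple_inj g g_inj) (dtuple_inj s s_inj).
exists w => a; have := congr1 (fun t => tnth t a) wgs.
by rewrite /= tnth_map tnth_ord_tuple /n_act tnth_map tnth_mktuple => ->.
Qed.

Lemma injectiveb_perm_comp l m (w : {perm 'I_m}) (s : {ffun 'I_l -> 'I_m}) :
  injectiveb [ffun a => w (s a)] = injectiveb s.
Proof.
apply/injectiveP/injectiveP => s_inj i j; last by rewrite !ffunE => /perm_inj/s_inj.
by move=> sij; apply: s_inj; rewrite !ffunE sij.
Qed.

Lemma Wact_basisv (k : pzRingType) l m (w : {perm 'I_m}) (g : {ffun 'I_l -> 'I_m}) :
  Wact w (basisv k g) = basisv k [ffun a => w (g a)].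
Proof.
apply/ffunP => s; rewrite !ffunE; congr (_%:R); congr nat_of_bool.
apply/idP/idP => /eqP sE; apply/eqP/ffunP => a.
  by rewrite -sE !ffunE permKV.
by rewrite sE !ffunE permK.
Qed.

Lemma Hgen_inj m l (g : {ffun 'I_l -> 'I_m}) : Hgen g -> injective g.
Proof. by move=> gE i j /(congr1 val); rewrite !gE => /addnI/val_inj. Qed.

Lemma Hgen_exists m l : (l <= m)%N -> exists g : {ffun 'I_l -> 'I_m}, Hgen g.
Proof.
move=> l_le_m; have lt_m (i : 'I_l) : (m - l + i < m)%N by have := ltn_ord i; lia.
by exists [ffun i => Ordinal (lt_m i)] => i; rewrite ffunE.
Qed.

Lemma Hmod_supported (k : pzRingType) m l (x : tens k l m) : (l <= m)%N ->
  Hmod x <-> supported (fun s : {ffun 'I_l -> 'I_m} => injectiveb s) x.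
Proof.
move=> l_le_m; split.
  move=> [g [/Hgen_inj g_inj [c ->]]] s; rewrite ffunE; apply: contraR => s_ninj.
  apply/eqP/big1 => w _; rewrite Wact_basisv ffunE.
  case: eqP => [sE | _]; last by rewrite mulr0.
  by case/negP: s_ninj; rewrite sE injectiveb_perm_comp; apply/injectiveP.
move=> x_supp; have [g gE] := Hgen_exists l_le_m; have g_inj := Hgen_inj gE.
pose wg (w : {perm 'I_m}) : {ffun 'I_l -> 'I_m} := [ffun a => w (g a)].
pose pk s := [pick w : {perm 'I_m} | wg w == s].
exists g; split => //.
(* [x s] is carried by a single chosen [w] with [wg w = s]. *)
exists (fun w : {perm 'I_m} => if pk (wg w) == Some w then x (wg w) else 0).
apply/ffunP => s; rewrite ffunE.
have termE w : (if pk (wg w) == Some w then x (wg w) else 0) * Wact w (basisv k g) s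
    = if wg w == s then (if pk s == Some w then x s else 0) else 0.
  rewrite Wact_basisv ffunE -/(wg w) (eq_sym s).
  by case: (wg w =P s) => [<- | _]; rewrite ?mulr1 ?mulr0.
rewrite (eq_bigr _ (fun w _ => termE w)) /pk; case: pickP => [w0 w0s | no_w].
  rewrite (bigD1 w0) //= w0s eqxx big1 ?addr0 // => w w_neq.
  by case: eqP => // _; case: eqP => // -[w0w]; rewrite w0w eqxx in w_neq.
rewrite big1 => [|w _]; last by rewrite no_w.
apply/eqP; apply: contraT => /x_supp/injectiveP s_inj.
have [w wgs] := perm_of_injections g_inj s_inj.
by case/eqP: (no_w w); apply/ffunP => a; rewrite ffunE.
Qed.

Lemma valtypeP r n (L : {set {set 'I_r}}) (t : {ffun 'I_r -> 'I_n}) :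
  partition L [set: 'I_r] ->
  valtype t = L <-> (forall a b, (t a == t b) = (b \in pblock L a)).
Proof.
case/and3P=> /eqP covL trivL L0.
have fibre_nz a : [set b | t b == t a] != set0 by apply/set0Pn; exists a; rewrite inE.
split=> [tL a b | tP].
  have fibre_in : [set b | t b == t a] \in L by rewrite -tL in_setD1 fibre_nz imset_f.
  by rewrite (def_pblock trivL fibre_in) 1?eq_sym inE.
apply/setP => X; rewrite in_setD1; apply/andP/idP => [[X_nz /imsetP [j _ Xj]] | XL].
  move: X_nz; rewrite Xj => /set0Pn [a]; rewrite inE => /eqP <-.
  rewrite (_ : [set b | t b == t a] = pblock L a) ?pblock_mem ?covL ?inE //.
  by apply/setP => b; rewrite inE -tP.
have /set0Pn [a aX] : X != set0 by apply: contraNneq L0 => <-.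
split; first by apply/set0Pn; exists a.
apply/imsetP; exists (t a) => //; apply/setP => b.
by rewrite inE -(def_pblock trivL XL aX) -tP eq_sym.
Qed.

Lemma block_labelling r l (L : {set {set 'I_r}}) (a0 : 'I_r) :
  partition L [set: 'I_r] -> #|L| = l ->
  exists idx : 'I_r -> 'I_l, exists rep : 'I_l -> 'I_r,
    (forall a b, (idx a == idx b) = (b \in pblock L a)) /\ cancel rep idx.
Proof.
case/and3P=> /eqP covL trivL L0 <-.
have coverL a : a \in cover L by rewrite covL inE.
have L_a0 := pblock_mem (coverL a0).
pose idx a : 'I_#|L| := enum_rank_in L_a0 (pblock L a).
pose blk (i : 'I_#|L|) : {set 'I_r} := enum_val i.
have blkL i : blk i \in L by apply: enum_valP.
have idxK a : blk (idx a) = pblock L a by rewrite /blk enum_rankK_in ?pblock_mem.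
exists idx, (fun i => odflt a0 [pick a in blk i]); split=> [a b|i].
  by rewrite -(eq_pblock _ trivL (coverL a)) -!idxK (inj_eq enum_val_inj).
have : blk i != set0 by apply: contraNneq L0 => <-.
case: pickP => [a Ea _ | none /set0Pn [a]]; last by rewrite none.
by apply: enum_val_inj; rewrite -/(blk _) idxK (def_pblock trivL (blkL i) Ea).
Qed.

Lemma block_labelling_max r l (L : {set {set 'I_r}}) (a0 : 'I_r) :
  partition L [set: 'I_r] -> #|L| = l.+1 ->
  exists idx : 'I_r -> 'I_l.+1, exists rep : 'I_l.+1 -> 'I_r,
    [/\ forall a b, (idx a == idx b) = (b \in pblock L a), cancel rep idx
      & idx a0 = ord_max].
Proof.
move=> pL cardL; have [idx [rep [idxP repK]]] := block_labelling a0 pL cardL.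
pose tau := tperm (idx a0) ord_max.
exists (tau \o idx), (rep \o tau); split=> [a b | i |] /=.
- by rewrite (inj_eq perm_inj) idxP.
- by rewrite repK tpermK.
- by rewrite tpermL.
Qed.

Section BlockLabelling.

Variables (r l : nat) (L : {set {set 'I_r}}) (idx : 'I_r -> 'I_l) (rep : 'I_l -> 'I_r).
Hypotheses (pL : partition L [set: 'I_r])
  (idxP : forall a b, (idx a == idx b) = (b \in pblock L a)) (repK : cancel rep idx).

Lemma valtype_label_comp n (h : 'I_l -> 'I_n) :
  valtype [ffun a => h (idx a)] = L <-> injective h.
Proof.
rewrite valtypeP //; split=> [hP i j hij | h_inj a b].
  by apply/eqP; rewrite -[i]repK -[j]repK idxP -hP !ffunE !repK hij.
by rewrite !ffunE (inj_eq h_inj) idxP.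
Qed.

Lemma valtype_label_factor n (t : {ffun 'I_r -> 'I_n}) : valtype t = L ->
  exists2 h : 'I_l -> 'I_n, injective h & t = [ffun a => h (idx a)].
Proof.
move=> tL; have tE : t = [ffun a => t (rep (idx a))].
  by apply/ffunP => a; rewrite ffunE; apply/eqP; move/valtypeP: tL => -> //; rewrite -idxP repK.
by exists (fun i => t (rep i)) => //; apply/valtype_label_comp; rewrite -tE.
Qed.

End BlockLabelling.

Definition extend_max l m (s : 'I_l -> 'I_m) (i : 'I_l.+1) : 'I_m.+1 :=
  if unlift ord_max i is Some j then lift ord_max (s j) else ord_max.

Lemma extend_max_max l m (s : 'I_l -> 'I_m) : extend_max s ord_max = ord_max.
Proof. by rewrite /extend_max unlift_none. Qed.

Lemma extend_max_lift l m (s : 'I_l -> 'I_m) j :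
  extend_max s (lift ord_max j) = lift ord_max (s j).
Proof. by rewrite /extend_max liftK. Qed.

Lemma extend_max_inj l m (s : 'I_l -> 'I_m) : injective s -> injective (extend_max s).
Proof.
move=> s_inj i j.
case: (unliftP ord_max i) => [i'|] ->; case: (unliftP ord_max j) => [j'|] ->;
  rewrite ?extend_max_lift ?extend_max_max //.
- by move=> /lift_inj /s_inj ->.
- by move/eqP; rewrite eq_sym (negbTE (neq_lift _ _)).
- by move/eqP; rewrite (negbTE (neq_lift _ _)).
Qed.

Lemma extend_max_onto l m (h : 'I_l.+1 -> 'I_m.+1) :
  injective h -> h ord_max = ord_max ->
  exists2 s : {ffun 'I_l -> 'I_m}, injective s & extend_max s =1 h.
Proof.
move=> h_inj h_max.
have l_le_m : (l <= m)%N by have := leq_card _ h_inj; rewrite !card_ord.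
pose s := [ffun j => odflt (widen_ord l_le_m j) (unlift ord_max (h (lift ord_max j)))].
have sE i : extend_max s i = h i.
  case: (unliftP ord_max i) => [j|] ->; last by rewrite extend_max_max.
  rewrite extend_max_lift ffunE; case: (unliftP ord_max (h (lift ord_max j))) => [j'|] hj //.
  by move: hj; rewrite -h_max => /h_inj/eqP; rewrite eq_sym (negbTE (neq_lift _ _)).
exists s => // i j sij; apply: (@lift_inj _ ord_max); apply: h_inj.
by rewrite -!sE !extend_max_lift sij.
Qed.

Lemma Vmod_kG_iso_Hmod (k : pzRingType) n r (L : {set {set 'I_r}}) :
  (0 < r)%N -> partition L [set: 'I_r] -> (#|L| <= n)%N ->
  kG_iso (@Wact k r n) (@Wact k #|L| n) (@Vmod k n r L) (@Hmod k n #|L|).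
Proof.
move=> r_gt0 pL cardL.
apply: (kG_iso_congr_r (fun y => iff_sym (Hmod_supported y cardL))).
have [idx [rep [idxP repK]]] := block_labelling (Ordinal r_gt0) pL (erefl #|L|).
apply: (@kG_iso_supported _ _ _ _ _ _ _ _
  (fun (w : {perm 'I_n}) t => [ffun a => (w^-1)%g (t a)])
  (fun (w : {perm 'I_n}) s => [ffun a => (w^-1)%g (s a)])
  (fun t => valtype t = L) (fun s => injectiveb s) (fun s => [ffun a => s (idx a)])).
- by move=> w x t; rewrite ffunE.
- by move=> w y s; rewrite ffunE.
- by move=> s /injectiveP s_inj; apply/(valtype_label_comp pL idxP repK).
- move=> s s' _ _ /ffunP ss'; apply/ffunP => i.
  by have := ss' (rep i); rewrite !ffunE repK.
- move=> t /(valtype_label_factor pL idxP repK) [h h_inj ->].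
  exists [ffun i => h i]; last by apply/ffunP => a; rewrite !ffunE.
  by apply/injectiveP => i j; rewrite !ffunE => /h_inj.
- by move=> w s; rewrite injectiveb_perm_comp.
- by move=> w s _; apply/ffunP => a; rewrite !ffunE.
Qed.

Lemma Vmod'_kG_iso_Hmod (k : pzRingType) m r (L : {set {set 'I_r.+1}}) :
  partition L [set: 'I_r.+1] -> (#|L| <= m.+1)%N ->
  kG_iso (@Wact' k r.+1 m) (@Wact k (#|L| - 1) m) (@Vmod' k m r L) (@Hmod k m (#|L| - 1)).
Proof.
move=> pL cardL; set l := (#|L| - 1)%N.
have cardL_l : #|L| = l.+1.
  suff : (0 < #|L|)%N by rewrite /l; lia.
  apply/card_gt0P; exists (pblock L ord_max); apply: pblock_mem.
  by case/and3P: pL => /eqP -> _ _; rewrite inE.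
have l_le_m : (l <= m)%N by rewrite /l; lia.
apply: (kG_iso_congr_r (fun y => iff_sym (Hmod_supported y l_le_m))).
have [idx [rep [idxP repK idx_max]]] := block_labelling_max ord_max pL cardL_l.
apply: (@kG_iso_supported _ _ _ _ _ _ _ _
  (fun (w : {perm 'I_m}) t => [ffun a => ((lift_perm ord_max ord_max w)^-1)%g (t a)])
  (fun (w : {perm 'I_m}) s => [ffun a => (w^-1)%g (s a)])
  (fun t => t ord_max = ord_max /\ valtype t = L) (fun s => injectiveb s)
  (fun s => [ffun a => extend_max s (idx a)])).
- by move=> w x t; rewrite ffunE.
- by move=> w y s; rewrite ffunE.
- move=> s /injectiveP s_inj; split; first by rewrite ffunE idx_max extend_max_max.
  exact/(valtype_label_comp pL idxP repK)/extend_max_inj.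
- move=> s s' _ _ /ffunP ss'; apply/ffunP => j.
  by have := ss' (rep (lift ord_max j)); rewrite !ffunE repK !extend_max_lift => /lift_inj.
- move=> t [t_max /(valtype_label_factor pL idxP repK) [h h_inj tE]].
  have h_max : h ord_max = ord_max by rewrite -idx_max -t_max tE ffunE.
  have [s s_inj sE] := extend_max_onto h_inj h_max.
  exists s; first exact/injectiveP.
  by apply/ffunP => a; rewrite tE !ffunE sE.
- by move=> w s; rewrite injectiveb_perm_comp.
- move=> w s _; apply/ffunP => a; rewrite !ffunE lift_permV.
  case: (unliftP ord_max (idx a)) => [j|] ->.
    by rewrite !extend_max_lift ffunE lift_perm_lift.
  by rewrite !extend_max_max lift_perm_id.
Qed.

Theorem proposition4p10 (k : pzRingType) (n r : nat)
  (L : {set {set 'I_r}}) (L' : {set {set 'I_r.+1}}) :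
  (0 < n)%N -> (0 < r)%N ->
  partition L [set: 'I_r] -> (#|L| <= n)%N ->
  partition L' [set: 'I_r.+1] -> (#|L'| <= n)%N ->
  kG_iso (@Wact k r n) (@Wact k #|L| n) (@Vmod k n r L) (@Hmod k n #|L|)
  /\ (forall m, n = m.+1 ->
      kG_iso (@Wact' k r.+1 m) (@Wact k (#|L'| - 1) m)
             (@Vmod' k m r L') (@Hmod k m (#|L'| - 1))).
Proof.
move=> _ r_gt0 pL cardL pL' cardL'; split; first exact: Vmod_kG_iso_Hmod.
by move=> m n_eq; apply: Vmod'_kG_iso_Hmod; rewrite -?n_eq.
Qed.
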